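(* Let $F:\mathbb{R}\to\mathbb{R}^3$ be a smooth, periodic (closed) regular curve, with period interval $I$, having nowhere vanishing Euclidean curvature $k$ and such that $f=\chi\circ F$ is a $1$-generic curve in $\mathbb{Q}_3$, i.e. $(k')^2+k^2\tau^2\neq0$ everywhere, where $\tau$ is the Euclidean torsion and $'=d/ds_e$ with $s_e$ the Euclidean arclength. Let $s$ be the conformal arclength and $\mu_2$ the second conformal curvature of $f$. Then $$\frac1{2\pi}\int_I\mu_2\,ds\equiv\frac1{2\pi}\int_I\tau\,ds_e\pmod{\mathbb{Z}}.$$ In particular the total twist $\mathrm{Tw}(F)=\frac1{2\pi}\int_I\tau\,ds_e\ (\mathrm{mod}\ \mathbb{Z})$ is invariant under conformal (Möbius) transformations.
   Context: $\chi:\mathbb{R}^3\to\mathbb{Q}_3$, $\chi(x)=[1:x:\tfrac12|x|^2]$, is the conformal embedding of $\mathbb{R}^3$ into the conformal sphere $\mathbb{Q}_3$ = projectivization of the null cone of $\langle v,w\rangle=\sum_{A=1}^3v^Aw^A-v^0w^4-v^4w^0$ on $\mathbb{R}^5$; $\mathrm{M\ddot{o}b}(3)$ is the identity component of the isometry group of this form. For a 1-generic curve $f$ in $\mathbb{Q}_3$ there is a Frenet frame $e:I\to\mathrm{M\ddot{o}b}(3)$, $[e_0]=f$, and smooth functions $\mu_1,\mu_2$ (of arbitrary sign) such that, with $\dot{}=d/ds$: $\dot e_0=e_1$, $\dot e_1=\mu_1e_0+e_4$, $\dot e_2=e_0+\mu_2e_3$, $\dot e_3=-\mu_2e_2$,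 $\dot e_4=\mu_1e_1+e_2$; here $s$ is the conformal arclength and $\mu_1,\mu_2$ are the conformal curvatures. *)

From Stdlib Require Import Reals ZArith.
Open Scope R_scope.

(* Vectors of R^5 are functions nat -> R; only indices 0..4 matter. *)
Definition R5 := nat -> R.

Definition lor (v w : R5) : R :=
  v 1%nat * w 1%nat + v 2%nat * w 2%nat + v 3%nat * w 3%nat
  - v 0%nat * w 4%nat - v 4%nat * w 0%nat.

Definition std (A : nat) : R5 := fun i => if Nat.eqb i A then 1 else 0.

(* A frame / 5x5 matrix, given by its columns: M A = M eps_A = e_A. *)
Definition frame := nat -> R5.

Definition is_isometry (M : frame) : Prop :=
  forall A B : nat, (A <= 4)%nat -> (B <= 4)%nat ->
    lor (M A) (M B) = lor (std A) (std B).

(* Mob(3): identity component of the isometry group, i.e. the isometries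
   joined to the identity by a continuous path of isometries. *)
Definition Mob3 (M : frame) : Prop :=
  exists gamma : R -> frame,
    (forall A i : nat, continuity (fun t => gamma t A i)) /\
    (forall A i : nat, (A <= 4)%nat -> (i <= 4)%nat ->
        gamma 0 A i = std A i /\ gamma 1 A i = M A i) /\
    (forall t, 0 <= t <= 1 -> is_isometry (gamma t)).

(* ---------- Euclidean R^3 (indices 1..3, as in the paper) ---------- *)
Definition R3 := nat -> R.

Definition dot3 (u v : R3) : R :=
  u 1%nat * v 1%nat + u 2%nat * v 2%nat + u 3%nat * v 3%nat.

Definition cross3 (u v : R3) : R3 := fun i =>
  match i with
  | 1%nat => u 2%nat * v 3%nat - u 3%nat * v 2%nat
  | 2%nat => u 3%nat * v 1%nat - u 1%nat * v 3%nat
  | 3%nat => u 1%nat * v 2%nat - u 2%nat * v 1%nat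
  | _ => 0
  end.

Definition norm3 (u : R3) : R := sqrt (dot3 u u).

Definition det3 (u v w : R3) : R := dot3 (cross3 u v) w.

(* conformal embedding chi(x) = [1 : x : |x|^2/2] (a representative in R^5) *)
Definition chi (x : R3) : R5 := fun i =>
  match i with
  | 0%nat => 1
  | 1%nat | 2%nat | 3%nat => x i
  | 4%nat => / 2 * dot3 x x
  | _ => 0
  end.

Definition is_smooth (f : R -> R) : Prop :=
  exists D : nat -> R -> R, D 0%nat = f /\
    forall (n : nat) (x : R), derivable_pt_lim (D n) x (D (S n) x).

(* A smooth curve in R^3 is given by the tower Fd of its derivatives:
   Fd n t = n-th derivative of F at t (componentwise). *)
Definition smooth_curve_tower (Fd : nat -> R -> R3) : Prop :=
  forall (n i : nat) (t : R), (1 <= i <= 3)%nat ->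
    derivable_pt_lim (fun u => Fd n u i) t (Fd (S n) t i).

Definition curvature (Fd : nat -> R -> R3) (t : R) : R :=
  norm3 (cross3 (Fd 1%nat t) (Fd 2%nat t)) / (norm3 (Fd 1%nat t)) ^ 3.

Definition torsion (Fd : nat -> R -> R3) (t : R) : R :=
  det3 (Fd 1%nat t) (Fd 2%nat t) (Fd 3%nat t)
    / (norm3 (cross3 (Fd 1%nat t) (Fd 2%nat t))) ^ 2.

Definition conformal_frenet (e : R -> frame) (mu1 mu2 : R -> R) : Prop :=
  forall (s : R) (i : nat), (i <= 4)%nat ->
    derivable_pt_lim (fun u => e u 0%nat i) s (e s 1%nat i) /\
    derivable_pt_lim (fun u => e u 1%nat i) s
      (mu1 s * e s 0%nat i + e s 4%nat i) /\
    derivable_pt_lim (fun u => e u 2%nat i) s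
      (e s 0%nat i + mu2 s * e s 3%nat i) /\
    derivable_pt_lim (fun u => e u 3%nat i) s (- mu2 s * e s 2%nat i) /\
    derivable_pt_lim (fun u => e u 4%nat i) s
      (mu1 s * e s 1%nat i + e s 2%nat i).

(* Let n2, n3 be the Euclidean parts at F of the frame vectors e2, e3.  They form a positively
   oriented orthonormal frame of the normal plane of F (positivity comes from det > 0 on Mob(3)),
   and the conformal Frenet equations say that, relative to a parallel normal frame, it turns
   with angular speed mu2 ds, while the binormal direction of F turns with angular speed
   tau ds_e.  Hence the angle between the binormal and n2 has derivative tau ds_e - mu2 ds.
   Both frames are periodic.  For (n2, n3) this is the rigidity of conformal frames along a
   given curve: if e and f both lie over chi o F, the ratio rho = f0 / e0 satisfies
   <f2, e2> = 1 / rho^2 by the Frenet equations, and |<f2, e2>| <= 1 forces rho >= 1; by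
   symmetry rho = 1, and then f2 = e2 modulo e0.  So over one period the angle changes by a
   multiple of 2 pi. *)

From Stdlib Require Import Reals ZArith Lra Lia Psatz.
Open Scope R_scope.

Lemma derivable_pt_lim_val f x a b :
  derivable_pt_lim f x a -> a = b -> derivable_pt_lim f x b.
Proof. now intros H <-. Qed.

Lemma derivable_pt_lim_shift f x a c :
  derivable_pt_lim f (x + c) a -> derivable_pt_lim (fun s => f (s + c)) x a.
Proof.
  intros H. apply derivable_pt_lim_val with (a * 1); [|ring].
  apply (derivable_pt_lim_comp (fun s => s + c) f); [|exact H].
  apply derivable_pt_lim_val with (1 + 0); [|ring].
  apply derivable_pt_lim_plus; [apply derivable_pt_lim_id | apply derivable_pt_lim_const].
Qed.

Lemma derivable_pt_lim_sqrt_comp f x a :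
  derivable_pt_lim f x a -> 0 < f x ->
  derivable_pt_lim (fun s => sqrt (f s)) x (a / (2 * sqrt (f x))).
Proof.
  intros Hf Hpos. apply derivable_pt_lim_val with (/ (2 * sqrt (f x)) * a).
  - exact (derivable_pt_lim_comp f sqrt x a _ Hf (derivable_pt_lim_sqrt _ Hpos)).
  - field. apply Rgt_not_eq, sqrt_lt_R0, Hpos.
Qed.

Lemma derivable_pt_lim_cos_comp f x a :
  derivable_pt_lim f x a -> derivable_pt_lim (fun s => cos (f s)) x (- sin (f x) * a).
Proof. intros H. exact (derivable_pt_lim_comp f cos x a _ H (derivable_pt_lim_cos (f x))). Qed.

Lemma derivable_pt_lim_sin_comp f x a :
  derivable_pt_lim f x a -> derivable_pt_lim (fun s => sin (f s)) x (cos (f x) * a).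
Proof. intros H. exact (derivable_pt_lim_comp f sin x a _ H (derivable_pt_lim_sin (f x))). Qed.

Lemma derivable_pt_lim_continuity_pt f x a : derivable_pt_lim f x a -> continuity_pt f x.
Proof. intros H. apply derivable_continuous_pt. now exists a. Qed.

Lemma null_derivative_interval f a b :
  a < b -> (forall t, a <= t <= b -> derivable_pt_lim f t 0) -> f b = f a.
Proof.
  intros Hab H. destruct (MVT_cor2 f (fun _ => 0) a b Hab H) as [c [Hc _]]. lra.
Qed.

Lemma increasing_of_pos_derivative f df a b :
  (forall t, derivable_pt_lim f t (df t)) -> (forall t, 0 < df t) -> a <= b -> f a <= f b.
Proof.
  intros Hf Hpos [Hab|<-]; [|lra].
  destruct (MVT_cor2 f df a b Hab (fun c _ => Hf c)) as [c [Hc _]].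
  specialize (Hpos c). nra.
Qed.

Lemma RiemannInt_antiderivative f a b (pr : Riemann_integrable f a b) :
  a <= b -> (forall x, a <= x <= b -> continuity_pt f x) ->
  exists G, (forall x, a <= x <= b -> derivable_pt_lim G x (f x)) /\ G b - G a = RiemannInt pr.
Proof.
  intros Hab Hc. exists (primitive Hab (FTC_P1 Hab Hc)). split.
  - intros x Hx. exact (RiemannInt_P28 Hab Hc Hx).
  - symmetry. exact (RiemannInt_P20 Hab (FTC_P1 Hab Hc) pr).
Qed.

Ltac derive_poly :=
  repeat first [ apply derivable_pt_lim_plus | apply derivable_pt_lim_minus
               | apply derivable_pt_lim_mult | apply derivable_pt_lim_opp
               | apply derivable_pt_lim_const ].

Ltac continuity_poly :=
  repeat first [ apply continuity_pt_plus | apply continuity_pt_minus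
               | apply continuity_pt_mult | apply continuity_pt_opp ].

(** * The Lorentzian form *)

Lemma lor_sym v w : lor v w = lor w v.
Proof. unfold lor; ring. Qed.

Lemma lor_ext v v' w w' :
  (forall i, (i <= 4)%nat -> v i = v' i) -> (forall i, (i <= 4)%nat -> w i = w' i) ->
  lor v w = lor v' w'.
Proof. intros Hv Hw. unfold lor. rewrite !Hv, !Hw by lia. reflexivity. Qed.

Lemma lor_scale_l c v w : lor (fun i => c * v i) w = c * lor v w.
Proof. unfold lor; ring. Qed.

Lemma lor_scale_r c v w : lor v (fun i => c * w i) = c * lor v w.
Proof. unfold lor; ring. Qed.

Lemma lor_plus_l u v w : lor (fun i => u i + v i) w = lor u w + lor v w.
Proof. unfold lor; ring. Qed.

Lemma lor_plus_r u v w : lor u (fun i => v i + w i) = lor u v + lor u w.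
Proof. unfold lor; ring. Qed.

Ltac lor_linear_in H :=
  repeat first [ rewrite lor_scale_l in H | rewrite lor_scale_r in H
               | rewrite lor_plus_l in H | rewrite lor_plus_r in H ].

Lemma derivable_pt_lim_lor (v w : R -> R5) (dv dw : R5) t :
  (forall i, (i <= 4)%nat -> derivable_pt_lim (fun s => v s i) t (dv i)) ->
  (forall i, (i <= 4)%nat -> derivable_pt_lim (fun s => w s i) t (dw i)) ->
  derivable_pt_lim (fun s => lor (v s) (w s)) t (lor dv (w t) + lor (v t) dw).
Proof.
  intros Hv Hw. unfold lor. eapply derivable_pt_lim_val.
  - derive_poly; first [apply Hv | apply Hw]; lia.
  - cbv beta; ring.
Qed.

Lemma lor_const_deriv (v w : R -> R5) (dv dw : R5) c t :
  (forall i, (i <= 4)%nat -> derivable_pt_lim (fun s => v s i) t (dv i)) ->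
  (forall i, (i <= 4)%nat -> derivable_pt_lim (fun s => w s i) t (dw i)) ->
  (forall s, lor (v s) (w s) = c) ->
  lor dv (w t) + lor (v t) dw = 0.
Proof.
  intros Hv Hw Hc. eapply uniqueness_limite; [apply derivable_pt_lim_lor; eauto|].
  apply (derivable_pt_lim_ext (fun _ => c)); [intros; now rewrite Hc|].
  apply derivable_pt_lim_const.
Qed.

Definition lor_std_val (A B : nat) : R :=
  match A, B with
  | 1%nat, 1%nat | 2%nat, 2%nat | 3%nat, 3%nat => 1
  | 0%nat, 4%nat | 4%nat, 0%nat => -1
  | _, _ => 0
  end.

Lemma isometry_lor M A B :
  is_isometry M -> (A <= 4)%nat -> (B <= 4)%nat -> lor (M A) (M B) = lor_std_val A B.
Proof.
  intros HM HA HB. rewrite HM by assumption. unfold lor, std.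
  destruct A as [|[|[|[|[|A]]]]]; destruct B as [|[|[|[|[|B]]]]]; try lia; simpl; ring.
Qed.

Ltac gram HM := rewrite ?(isometry_lor _ _ _ HM) in * by lia; cbn [lor_std_val] in *.

(* Euclidean part of [y] seen from the point [chi X]; it vanishes on [chi X] itself. *)
Definition vv (y : R5) (X : R3) : R3 := fun k => y k - y 0%nat * X k.

Lemma lor_orth_chi y z X :
  lor y (chi X) = 0 -> lor z (chi X) = 0 -> lor y z = dot3 (vv y X) (vv z X).
Proof.
  cbv beta iota delta [lor chi dot3 vv]. intros Hy Hz.
  assert (y 4%nat = y 1%nat * X 1%nat + y 2%nat * X 2%nat + y 3%nat * X 3%nat
    - y 0%nat * (/ 2 * (X 1%nat * X 1%nat + X 2%nat * X 2%nat + X 3%nat * X 3%nat))) as -> by lra.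
  assert (z 4%nat = z 1%nat * X 1%nat + z 2%nat * X 2%nat + z 3%nat * X 3%nat
    - z 0%nat * (/ 2 * (X 1%nat * X 1%nat + X 2%nat * X 2%nat + X 3%nat * X 3%nat))) as -> by lra.
  field.
Qed.

(** * Orientation and time orientation of [Mob3] *)

Fixpoint sgn (k : nat) : R := match k with O => 1 | S k => - sgn k end.

Definition skip (j k : nat) : nat := if Nat.ltb k j then k else S k.

(* Laplace expansion along the first row; [lapl d m j] sums the first [j] terms. *)
Fixpoint lapl (d : (nat -> nat -> R) -> R) (m : nat -> nat -> R) (j : nat) : R :=
  match j with
  | O => 0
  | S j' => lapl d m j' + sgn j' * m 0%nat j' * d (fun a b => m (S a) (skip j' b))
  end.

Fixpoint detn (n : nat) (m : nat -> nat -> R) : R :=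
  match n with O => 1 | S n' => lapl (detn n') m n end.

Definition mul5 (a b : nat -> nat -> R) (i j : nat) : R :=
  a i 0%nat * b 0%nat j + a i 1%nat * b 1%nat j + a i 2%nat * b 2%nat j
  + a i 3%nat * b 3%nat j + a i 4%nat * b 4%nat j.

Definition idm (i j : nat) : R := if Nat.eqb i j then 1 else 0.

Lemma detn_mul5 a b : detn 5 (mul5 a b) = detn 5 a * detn 5 b.
Proof. unfold mul5. simpl. unfold skip; simpl. ring. Qed.

Lemma detn_idm : detn 5 idm = 1.
Proof. simpl. unfold skip, idm; simpl. ring. Qed.

Lemma lapl_ext (d d' : (nat -> nat -> R) -> R) m m' n :
  (forall j, (j < n)%nat -> m 0%nat j = m' 0%nat j /\
     d (fun a b => m (S a) (skip j b)) = d' (fun a b => m' (S a) (skip j b))) ->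
  lapl d m n = lapl d' m' n.
Proof.
  induction n as [|n IH]; intros H; simpl; [reflexivity|].
  destruct (H n) as [-> ->]; [lia|]. rewrite IH; [reflexivity|]. intros; apply H; lia.
Qed.

Lemma detn_ext n m m' :
  (forall i j, (i < n)%nat -> (j < n)%nat -> m i j = m' i j) -> detn n m = detn n m'.
Proof.
  revert m m'; induction n as [|n IH]; intros m m' H; [reflexivity|].
  apply lapl_ext. intros j Hj. split; [apply H; lia|].
  apply IH. intros a b Ha Hb. apply H; [lia|]. unfold skip. destruct (Nat.ltb_spec b j); lia.
Qed.

Lemma detn_continuity n (m : R -> nat -> nat -> R) :
  (forall i j, continuity (fun t => m t i j)) -> continuity (fun t => detn n (m t)).
Proof.
  revert m; induction n as [|n IH]; intros m H; [now apply continuity_const|].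
  change (continuity (fun t => lapl (detn n) (m t) (S n))).
  generalize (S n); intros j; induction j as [|j IHj]; simpl; [now apply continuity_const|].
  apply continuity_plus; [exact IHj|]. apply continuity_mult.
  - apply continuity_mult; [now apply continuity_const | apply H].
  - apply (IH (fun t a b => m t (S a) (skip j b))). intros; apply H.
Qed.

(* Row [k], column [A] holds component [k] of [e_A]. *)
Definition matof (M : frame) (k A : nat) : R := M A k.

(* [N = J M^T J] with [J] the Gram matrix of [lor]; [N M = 1] for an isometry [M]. *)
Definition Jv (v : R5) (k : nat) : R :=
  match k with 0%nat => - v 4%nat | 4%nat => - v 0%nat | _ => v k end.
Definition Nmat (M : frame) (A k : nat) : R :=
  match A with 0%nat => - Jv (M 4%nat) k | 4%nat => - Jv (M 0%nat) k | _ => Jv (M A) k end.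

Lemma isometry_left_inverse M : is_isometry M -> forall A B, (A < 5)%nat -> (B < 5)%nat ->
  mul5 (Nmat M) (matof M) A B = idm A B.
Proof.
  intros HM A B HA HB.
  pose proof (HM A B ltac:(lia) ltac:(lia)) as H1.
  pose proof (HM 4%nat B ltac:(lia) ltac:(lia)) as H2.
  pose proof (HM 0%nat B ltac:(lia) ltac:(lia)) as H3.
  unfold mul5, matof, Nmat, Jv, idm.
  destruct A as [|[|[|[|[|A]]]]]; try lia; destruct B as [|[|[|[|[|B]]]]]; try lia;
  unfold lor, std in *; simpl in *; lra.
Qed.

Lemma isometry_det_neq0 M : is_isometry M -> detn 5 (matof M) <> 0.
Proof.
  intros HM E.
  assert (detn 5 (mul5 (Nmat M) (matof M)) = 1) as H1.
  { rewrite <- detn_idm. apply detn_ext. intros; apply isometry_left_inverse; auto. }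
  rewrite detn_mul5, E in H1. lra.
Qed.

Lemma isometry_e0_time_neq0 M : is_isometry M -> M 0%nat 0%nat + M 0%nat 4%nat <> 0.
Proof.
  intros HM E.
  pose proof (HM 0%nat 0%nat ltac:(lia) ltac:(lia)) as H00.
  pose proof (HM 0%nat 4%nat ltac:(lia) ltac:(lia)) as H04.
  unfold lor, std in *; simpl in *.
  assert (M 0%nat 4%nat = - M 0%nat 0%nat) as E4 by lra. rewrite E4 in H00.
  assert (M 0%nat 0%nat = 0) as E0 by nra.
  assert (M 0%nat 1%nat = 0) as E1 by nra.
  assert (M 0%nat 2%nat = 0) as E2 by nra.
  assert (M 0%nat 3%nat = 0) as E3 by nra.
  rewrite E4, E0, E1, E2, E3 in H04. lra.
Qed.

Lemma Mob3_isometry M : Mob3 M -> is_isometry M.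
Proof.
  intros [g [_ [Hends Hiso]]] A B HA HB.
  rewrite <- (Hiso 1 ltac:(lra) A B HA HB).
  apply lor_ext; intros; symmetry; apply Hends; auto.
Qed.

Lemma continuity_nonvanishing_pos (f : R -> R) :
  continuity f -> 0 < f 0 -> (forall t, 0 <= t <= 1 -> f t <> 0) -> 0 < f 1.
Proof.
  intros Hc H0 Hn. destruct (Rlt_le_dec 0 (f 1)) as [h|[h|h]]; auto.
  - destruct (IVT (fun t => - f t) 0 1) as [z [Hz Hz0]];
      [now apply continuity_opp | lra | lra | lra |].
    exfalso. apply (Hn z Hz). lra.
  - exfalso. apply (Hn 1); [lra | exact h].
Qed.

Lemma Mob3_pos_invariant (phi : frame -> R) M :
  Mob3 M ->
  (forall g : R -> frame, (forall A i, continuity (fun t => g t A i)) ->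
     continuity (fun t => phi (g t))) ->
  (forall N N' : frame, (forall A i, (A <= 4)%nat -> (i <= 4)%nat -> N A i = N' A i) ->
     phi N = phi N') ->
  0 < phi std -> (forall N, is_isometry N -> phi N <> 0) -> 0 < phi M.
Proof.
  intros [g [Hc [Hends Hiso]]] Hcont Hloc Hid Hnz.
  rewrite (Hloc M (g 1)) by (intros; symmetry; apply Hends; auto).
  apply (continuity_nonvanishing_pos (fun t => phi (g t))).
  - apply Hcont, Hc.
  - rewrite (Hloc (g 0) std) by (intros; apply Hends; auto). exact Hid.
  - intros t Ht. apply Hnz, Hiso, Ht.
Qed.

Lemma Mob3_det_pos M : Mob3 M -> 0 < detn 5 (matof M).
Proof.
  intros HM. apply (Mob3_pos_invariant (fun N => detn 5 (matof N))); auto.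
  - intros g Hg. apply (detn_continuity 5 (fun t => matof (g t))). intros; apply Hg.
  - intros N N' H. apply detn_ext. intros; apply H; lia.
  - replace (detn 5 (matof std)) with (detn 5 idm) by (apply detn_ext; intros;
      unfold matof, idm, std; now rewrite Nat.eqb_sym).
    rewrite detn_idm. lra.
  - apply isometry_det_neq0.
Qed.

Lemma Mob3_e0_time_pos M : Mob3 M -> 0 < M 0%nat 0%nat + M 0%nat 4%nat.
Proof.
  intros HM. apply (Mob3_pos_invariant (fun N => N 0%nat 0%nat + N 0%nat 4%nat)); auto.
  - intros g Hg. apply continuity_plus; apply Hg.
  - intros N N' H. rewrite !H by lia. reflexivity.
  - unfold std; simpl; lra.
  - apply isometry_e0_time_neq0.
Qed.

(** * Euclidean vector algebra *)

Ltac unfold3 := unfold det3, dot3, cross3; cbv beta iota.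

Lemma dot3_sym a b : dot3 a b = dot3 b a.
Proof. unfold3; ring. Qed.

Lemma dot3_nonneg a : 0 <= dot3 a a.
Proof. unfold dot3. nra. Qed.

Lemma dot3_cross3_l a b : dot3 a (cross3 a b) = 0.
Proof. unfold3; ring. Qed.

Lemma dot3_cross3 a b c d :
  dot3 (cross3 a b) (cross3 c d) = dot3 a c * dot3 b d - dot3 a d * dot3 b c.
Proof. unfold3; ring. Qed.

Lemma det3_sqr_gram a b c :
  (det3 a b c) ^ 2 = dot3 a a * dot3 b b * dot3 c c + 2 * dot3 a b * dot3 b c * dot3 c a
    - dot3 a a * (dot3 b c) ^ 2 - dot3 b b * (dot3 a c) ^ 2 - dot3 c c * (dot3 a b) ^ 2.
Proof. unfold3; ring. Qed.

(* Parseval's identity in the orthogonal frame [X1], [(X1 x X2) x X1], [X1 x X2]. *)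
Lemma dot3_orthogonal_expansion V Z X1 X2 :
  let B := cross3 X1 X2 in let N := cross3 B X1 in
  dot3 B B * dot3 X1 X1 * dot3 V Z =
    dot3 B B * dot3 V X1 * dot3 Z X1 + dot3 V N * dot3 Z N + dot3 X1 X1 * dot3 V B * dot3 Z B.
Proof. unfold3; ring. Qed.

Lemma dot3_unit_cauchy a b :
  dot3 a a = 1 -> dot3 b b = 1 ->
  (dot3 a b) ^ 2 <= 1 /\ (dot3 a b = 1 -> forall k, (1 <= k <= 3)%nat -> a k = b k).
Proof.
  intros Ha Hb. set (c := dot3 a b).
  assert (Hsq : (a 1%nat - c * b 1%nat) ^ 2 + (a 2%nat - c * b 2%nat) ^ 2
                + (a 3%nat - c * b 3%nat) ^ 2 = dot3 a a - 2 * c * dot3 a b + c ^ 2 * dot3 b b).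
  { unfold c; unfold3; ring. }
  rewrite Ha, Hb in Hsq. fold c in Hsq.
  pose proof (pow2_ge_0 (a 1%nat - c * b 1%nat)). pose proof (pow2_ge_0 (a 2%nat - c * b 2%nat)).
  pose proof (pow2_ge_0 (a 3%nat - c * b 3%nat)).
  split; [nra|].
  intros Hc k Hk. rewrite Hc in Hsq.
  destruct k as [|[|[|[|k]]]]; try lia; nra.
Qed.

Lemma cross3_oriented_normal a b c :
  0 < dot3 a a -> dot3 b b = 1 -> dot3 c c = 1 ->
  dot3 a b = 0 -> dot3 a c = 0 -> dot3 b c = 0 -> 0 < det3 a b c ->
  forall k, (1 <= k <= 3)%nat -> c k * sqrt (dot3 a a) = cross3 a b k.
Proof.
  intros Ha Hb Hc Hab Hac Hbc Hdet.
  pose proof (det3_sqr_gram a b c) as G.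
  rewrite Hb, Hc, Hab, Hbc, (dot3_sym c a), Hac in G.
  set (w := sqrt (dot3 a a)).
  assert (Hw : w * w = dot3 a a) by (apply sqrt_sqrt; lra).
  assert (Hw0 : 0 < w) by (apply sqrt_lt_R0; lra).
  assert (HD : det3 a b c = w).
  { assert ((det3 a b c - w) * (det3 a b c + w) = 0) as H by nra.
    apply Rmult_integral in H as [H|H]; nra. }
  assert (HB : dot3 (cross3 a b) (cross3 a b) = dot3 a a).
  { rewrite dot3_cross3, Hb, Hab. ring. }
  assert (S : (c 1%nat * w - cross3 a b 1%nat) ^ 2 + (c 2%nat * w - cross3 a b 2%nat) ^ 2
              + (c 3%nat * w - cross3 a b 3%nat) ^ 2 = 0).
  { transitivity (dot3 c c * (w * w) - 2 * w * det3 a b c + dot3 (cross3 a b) (cross3 a b)).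
    - clearbody w. unfold3. ring.
    - rewrite Hc, HD, HB, <- Hw. ring. }
  pose proof (pow2_ge_0 (c 1%nat * w - cross3 a b 1%nat)).
  pose proof (pow2_ge_0 (c 2%nat * w - cross3 a b 2%nat)).
  pose proof (pow2_ge_0 (c 3%nat * w - cross3 a b 3%nat)).
  intros k Hk. destruct k as [|[|[|[|k]]]]; try lia; nra.
Qed.

Lemma derivable_pt_lim_dot3 (a b : R -> R3) (da db : R3) t :
  (forall k, (1 <= k <= 3)%nat -> derivable_pt_lim (fun s => a s k) t (da k)) ->
  (forall k, (1 <= k <= 3)%nat -> derivable_pt_lim (fun s => b s k) t (db k)) ->
  derivable_pt_lim (fun s => dot3 (a s) (b s)) t (dot3 da (b t) + dot3 (a t) db).
Proof.
  intros Ha Hb. unfold dot3. eapply derivable_pt_lim_val.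
  - derive_poly; first [apply Ha | apply Hb]; lia.
  - cbv beta; ring.
Qed.

Lemma lor_unit_orth_chi y z X :
  lor y (chi X) = 0 -> lor z (chi X) = 0 -> lor y y = 1 -> lor z z = 1 ->
  (lor y z) ^ 2 <= 1 /\ (lor y z = 1 -> forall k, (1 <= k <= 3)%nat -> vv y X k = vv z X k).
Proof.
  intros Hy Hz Hyy Hzz. rewrite (lor_orth_chi y z X) by assumption.
  apply dot3_unit_cauchy; rewrite <- lor_orth_chi; assumption.
Qed.

(** * Rigidity of the conformal frame along a curve *)

Definition frenet_rhs (k1 k2 : R) (M : frame) (A : nat) : R5 := fun i =>
  match A with
  | 0%nat => M 1%nat i
  | 1%nat => k1 * M 0%nat i + M 4%nat i
  | 2%nat => M 0%nat i + k2 * M 3%nat i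
  | 3%nat => - k2 * M 2%nat i
  | _ => k1 * M 1%nat i + M 2%nat i
  end.

(* The conformal Frenet equations in a parameter whose conformal arclength has derivative [u]. *)
Definition frenet_at_speed (E : R -> frame) (u m1 m2 : R -> R) : Prop :=
  forall t A i, (A <= 4)%nat -> (i <= 4)%nat ->
    derivable_pt_lim (fun s => E s A i) t (u t * frenet_rhs (m1 t) (m2 t) (E t) A i).

Section FrameRigidity.
Variables (E F : R -> frame) (u m1 m2 v n1 n2 : R -> R) (X : R -> R3).
Hypotheses (HE : frenet_at_speed E u m1 m2) (HF : frenet_at_speed F v n1 n2)
  (IE : forall s, is_isometry (E s)) (IF : forall s, is_isometry (F s))
  (Pu : forall s, 0 < u s) (Pv : forall s, 0 < v s)
  (PE : forall s, 0 < E s 0%nat 0%nat) (PF : forall s, 0 < F s 0%nat 0%nat)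
  (CE : forall s i, (i <= 4)%nat -> E s 0%nat i = E s 0%nat 0%nat * chi (X s) i)
  (CF : forall s i, (i <= 4)%nat -> F s 0%nat i = F s 0%nat 0%nat * chi (X s) i).

Let rho s := F s 0%nat 0%nat / E s 0%nat 0%nat.
Let drho s := (v s * F s 1%nat 0%nat * E s 0%nat 0%nat - u s * E s 1%nat 0%nat * F s 0%nat 0%nat)
   / Rsqr (E s 0%nat 0%nat).

Lemma rho_pos s : 0 < rho s.
Proof. apply Rdiv_lt_0_compat; auto. Qed.

Lemma F0_eq_rho_E0 s i : (i <= 4)%nat -> F s 0%nat i = rho s * E s 0%nat i.
Proof.
  intros Hi. unfold rho. rewrite (CF s i), (CE s i) by auto.
  field. apply Rgt_not_eq, PE.
Qed.

Lemma lor_F0 s w : lor (F s 0%nat) w = rho s * lor (E s 0%nat) w.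
Proof.
  rewrite <- lor_scale_l. apply lor_ext; [|reflexivity]. intros; now apply F0_eq_rho_E0.
Qed.

Lemma derivable_pt_lim_rho s : derivable_pt_lim rho s (drho s).
Proof.
  apply derivable_pt_lim_div; [apply HF | apply HE | apply Rgt_not_eq, PE]; lia.
Qed.

Lemma F1_speed s i : (i <= 4)%nat ->
  v s * F s 1%nat i = drho s * E s 0%nat i + rho s * (u s * E s 1%nat i).
Proof.
  intros Hi. eapply uniqueness_limite; [apply (HF s 0%nat i ltac:(lia) Hi)|].
  apply (derivable_pt_lim_ext (fun s => rho s * E s 0%nat i)).
  { intros; now rewrite F0_eq_rho_E0. }
  apply derivable_pt_lim_mult; [apply derivable_pt_lim_rho | apply HE; lia].
Qed.

Lemma speed_ratio s : v s = rho s * u s.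
Proof.
  assert (v s * v s = (rho s * u s) * (rho s * u s)) as Hsq.
  { transitivity (lor (fun i => v s * F s 1%nat i) (fun i => v s * F s 1%nat i)).
    - rewrite lor_scale_l, lor_scale_r. gram (IF s). ring.
    - rewrite (lor_ext _ (fun i => drho s * E s 0%nat i + rho s * (u s * E s 1%nat i))
                     _ (fun i => drho s * E s 0%nat i + rho s * (u s * E s 1%nat i)))
        by (intros; apply F1_speed; auto).
      transitivity (drho s ^ 2 * lor (E s 0%nat) (E s 0%nat)
        + 2 * drho s * rho s * u s * lor (E s 0%nat) (E s 1%nat)
        + (rho s * u s) ^ 2 * lor (E s 1%nat) (E s 1%nat)); [unfold lor; ring|].
      gram (IE s). ring. }
  assert (0 < rho s * u s) by (apply Rmult_lt_0_compat; [apply rho_pos | apply Pu]).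
  pose proof (Pv s). nra.
Qed.

Let a s := drho s / v s.

Lemma F1_eq_E1_plus_E0 s i : (i <= 4)%nat -> F s 1%nat i = E s 1%nat i + a s * E s 0%nat i.
Proof.
  intros Hi. pose proof (F1_speed s i Hi) as H. pose proof (rho_pos s). pose proof (Pu s).
  unfold a. rewrite speed_ratio in H |- *.
  apply (Rmult_eq_reg_l (rho s * u s)); [rewrite H; field; lra | nra].
Qed.

Lemma lor_F1 s w : lor (F s 1%nat) w = lor (E s 1%nat) w + a s * lor (E s 0%nat) w.
Proof.
  rewrite <- lor_scale_l, <- lor_plus_l. apply lor_ext; [|reflexivity].
  intros; now apply F1_eq_E1_plus_E0.
Qed.

Lemma lor_F1_E0 s : lor (F s 1%nat) (E s 0%nat) = 0.
Proof. rewrite lor_F1. gram (IE s). ring. Qed.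

Lemma lor_F1_E2 s : lor (F s 1%nat) (E s 2%nat) = 0.
Proof. rewrite lor_F1. gram (IE s). ring. Qed.

Lemma lor_F1_E3 s : lor (F s 1%nat) (E s 3%nat) = 0.
Proof. rewrite lor_F1. gram (IE s). ring. Qed.

Lemma lor_F4_E3 s : lor (F s 4%nat) (E s 3%nat) = 0.
Proof.
  pose proof (lor_const_deriv (fun s => F s 1%nat) (fun s => E s 3%nat) _ _ 0 s
    (fun i => HF s 1%nat i ltac:(lia)) (fun i => HE s 3%nat i ltac:(lia))
    lor_F1_E3) as H.
  cbn [frenet_rhs] in H. lor_linear_in H. rewrite lor_F0, lor_F1_E2 in H. gram (IE s).
  pose proof (Pv s). nra.
Qed.

Lemma lor_F4_E2 s : lor (F s 4%nat) (E s 2%nat) = 0.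
Proof.
  pose proof (lor_const_deriv (fun s => F s 1%nat) (fun s => E s 2%nat) _ _ 0 s
    (fun i => HF s 1%nat i ltac:(lia)) (fun i => HE s 2%nat i ltac:(lia))
    lor_F1_E2) as H.
  cbn [frenet_rhs] in H. lor_linear_in H. rewrite lor_F0, lor_F1_E0, lor_F1_E3 in H.
  gram (IE s). pose proof (Pv s). nra.
Qed.

Lemma lor_F2_E2 s : lor (F s 2%nat) (E s 2%nat) = / (rho s) ^ 2.
Proof.
  pose proof (lor_const_deriv (fun s => F s 4%nat) (fun s => E s 2%nat) _ _ 0 s
    (fun i => HF s 4%nat i ltac:(lia)) (fun i => HE s 2%nat i ltac:(lia))
    lor_F4_E2) as H.
  cbn [frenet_rhs] in H. lor_linear_in H. rewrite lor_F1_E2, lor_F4_E3 in H.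
  assert (lor (F s 4%nat) (E s 0%nat) = - / rho s) as H40.
  { assert (lor (F s 4%nat) (F s 0%nat) = rho s * lor (F s 4%nat) (E s 0%nat)) as H'
      by (rewrite lor_sym, lor_F0, lor_sym; reflexivity).
    gram (IF s). pose proof (rho_pos s).
    apply (Rmult_eq_reg_l (rho s)); [rewrite <- H'; field|]; lra. }
  rewrite H40, speed_ratio in H. pose proof (rho_pos s). pose proof (Pu s).
  assert (u s * (rho s * lor (F s 2%nat) (E s 2%nat) - / rho s) = 0) as H' by (rewrite <- H; ring).
  apply Rmult_integral in H' as [H'|H']; [lra|].
  apply (Rmult_eq_reg_l (rho s)); [|lra]. rewrite Rminus_diag_uniq with (1 := H'). field. lra.
Qed.

Lemma lor_F2_E2_unit s : (lor (F s 2%nat) (E s 2%nat)) ^ 2 <= 1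
  /\ (lor (F s 2%nat) (E s 2%nat) = 1 ->
      forall k, (1 <= k <= 3)%nat -> vv (F s 2%nat) (X s) k = vv (E s 2%nat) (X s) k).
Proof.
  assert (Horth : forall G : frame, is_isometry G -> 0 < G 0%nat 0%nat ->
      (forall i, (i <= 4)%nat -> G 0%nat i = G 0%nat 0%nat * chi (X s) i) ->
      lor (G 2%nat) (chi (X s)) = 0).
  { intros G HG HG0 HGc.
    assert (G 0%nat 0%nat * lor (G 2%nat) (chi (X s)) = 0) as H; [|nra].
    rewrite <- lor_scale_r. transitivity (lor (G 2%nat) (G 0%nat)).
    - apply lor_ext; [reflexivity|]. intros; symmetry; auto.
    - gram HG. reflexivity. }
  apply lor_unit_orth_chi; try (apply Horth; auto); [gram (IF s) | gram (IE s)]; reflexivity.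
Qed.

Lemma E0_scale_le s : E s 0%nat 0%nat <= F s 0%nat 0%nat.
Proof.
  pose proof (proj1 (lor_F2_E2_unit s)) as H. rewrite lor_F2_E2 in H.
  pose proof (rho_pos s) as Hr.
  assert (1 <= rho s) as H1.
  { destruct (Rle_lt_dec 1 (rho s)) as [|Hlt]; auto.
    assert (1 < / rho s ^ 2); [|nra].
    rewrite <- Rinv_1. apply Rinv_lt_contravar; nra. }
  pose proof (PE s). unfold rho in H1.
  apply Rmult_le_compat_r with (r := E s 0%nat 0%nat) in H1; [|lra].
  replace (F s 0%nat 0%nat / E s 0%nat 0%nat * E s 0%nat 0%nat) with (F s 0%nat 0%nat) in H1
    by (field; lra).
  lra.
Qed.

Lemma vv_E2_eq s : E s 0%nat 0%nat = F s 0%nat 0%nat ->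
  forall k, (1 <= k <= 3)%nat -> vv (F s 2%nat) (X s) k = vv (E s 2%nat) (X s) k.
Proof.
  intros Heq. apply (proj2 (lor_F2_E2_unit s)).
  rewrite lor_F2_E2. unfold rho. rewrite Heq. field. pose proof (PF s). lra.
Qed.

End FrameRigidity.

Lemma frame_rigidity (E F : R -> frame) (u m1 m2 v n1 n2 : R -> R) (X : R -> R3) :
  frenet_at_speed E u m1 m2 -> frenet_at_speed F v n1 n2 ->
  (forall s, is_isometry (E s)) -> (forall s, is_isometry (F s)) ->
  (forall s, 0 < u s) -> (forall s, 0 < v s) ->
  (forall s, 0 < E s 0%nat 0%nat) -> (forall s, 0 < F s 0%nat 0%nat) ->
  (forall s i, (i <= 4)%nat -> E s 0%nat i = E s 0%nat 0%nat * chi (X s) i) ->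
  (forall s i, (i <= 4)%nat -> F s 0%nat i = F s 0%nat 0%nat * chi (X s) i) ->
  forall s, E s 0%nat 0%nat = F s 0%nat 0%nat
    /\ forall k, (1 <= k <= 3)%nat -> vv (F s 2%nat) (X s) k = vv (E s 2%nat) (X s) k.
Proof.
  intros HE HF IE IF Pu Pv PE PF CE CF s.
  assert (E s 0%nat 0%nat = F s 0%nat 0%nat) as Heq.
  { apply Rle_antisym; eapply E0_scale_le; eauto. }
  split; [exact Heq | eapply vv_E2_eq; eauto].
Qed.

(** * Curves in the conformal sphere *)

Lemma frenet_at_speed_reparam e mu1 mu2 sigma dsigma :
  conformal_frenet e mu1 mu2 -> (forall t, derivable_pt_lim sigma t (dsigma t)) ->
  frenet_at_speed (fun t => e (sigma t)) dsigma (fun t => mu1 (sigma t)) (fun t => mu2 (sigma t)).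
Proof.
  intros Hfr Hsig t A i HA Hi. destruct (Hfr (sigma t) i Hi) as (D0 & D1 & D2 & D3 & D4).
  eapply derivable_pt_lim_val; [|apply Rmult_comm].
  apply (derivable_pt_lim_comp sigma (fun s => e s A i)); [apply Hsig|].
  destruct A as [|[|[|[|[|A]]]]]; try lia; assumption.
Qed.

Lemma frenet_at_speed_shift E u m1 m2 c :
  frenet_at_speed E u m1 m2 ->
  frenet_at_speed (fun t => E (t + c)) (fun t => u (t + c)) (fun t => m1 (t + c))
    (fun t => m2 (t + c)).
Proof.
  intros H t A i HA Hi. apply (derivable_pt_lim_shift (fun s => E s A i)), H; assumption.
Qed.

Lemma smooth_curve_tower_periodic Fd c :
  smooth_curve_tower Fd ->
  (forall t i, (1 <= i <= 3)%nat -> Fd 0%nat (t + c) i = Fd 0%nat t i) ->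
  forall n t i, (1 <= i <= 3)%nat -> Fd n (t + c) i = Fd n t i.
Proof.
  intros Htow Hper n. induction n as [|n IH]; intros t i Hi; [now apply Hper|].
  eapply uniqueness_limite; [apply derivable_pt_lim_shift, Htow; exact Hi|].
  apply (derivable_pt_lim_ext (fun s => Fd n s i)); [intros; now rewrite IH|].
  now apply Htow.
Qed.

Lemma is_smooth_continuity f : is_smooth f -> forall x, continuity_pt f x.
Proof.
  intros [D [HD0 HD]] x. rewrite <- HD0.
  eapply derivable_pt_lim_continuity_pt. apply HD.
Qed.

Definition chi_deriv (X X1 : R3) (i : nat) : R :=
  match i with
  | 1%nat | 2%nat | 3%nat => X1 i
  | 4%nat => dot3 X X1
  | _ => 0
  end.

Lemma derivable_pt_lim_chi (X : R -> R3) (X1 : R3) t i :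
  (forall k, (1 <= k <= 3)%nat -> derivable_pt_lim (fun s => X s k) t (X1 k)) ->
  derivable_pt_lim (fun s => chi (X s) i) t (chi_deriv (X t) X1 i).
Proof.
  intros HX. destruct i as [|[|[|[|[|i]]]]]; cbv beta iota delta [chi chi_deriv dot3];
    try apply derivable_pt_lim_const; try (apply HX; lia).
  eapply derivable_pt_lim_val.
  - apply (derivable_pt_lim_mult (fun _ => / 2)); [apply derivable_pt_lim_const|].
    derive_poly; apply HX; lia.
  - cbv beta. field.
Qed.

Lemma lor_chi_deriv y X X1 : lor y (chi_deriv X X1) = dot3 (vv y X) X1.
Proof. cbv beta iota delta [lor chi_deriv dot3 vv]. ring. Qed.

(* Relates the orientation of a conformal frame to that of the Euclidean frame
   [X1, vv e2, vv e3]. *)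
Lemma detn_frame_chi (E : frame) (X X1 : R3) lam dlam u :
  (forall i, (i <= 4)%nat -> E 0%nat i = lam * chi X i) ->
  (forall i, (i <= 4)%nat -> u * E 1%nat i = dlam * chi X i + lam * chi_deriv X X1 i) ->
  lor (E 2%nat) (chi X) = 0 -> lor (E 3%nat) (chi X) = 0 -> lam * lor (E 4%nat) (chi X) = -1 ->
  u <> 0 -> lam <> 0 ->
  u * detn 5 (matof E) = lam * det3 X1 (vv (E 2%nat) X) (vv (E 3%nat) X).
Proof.
  intros H0 H1 H2 H3 H4 Hu Hl.
  assert (G1 : forall i, (i <= 4)%nat -> E 1%nat i = (dlam * chi X i + lam * chi_deriv X X1 i) / u).
  { intros. rewrite <- H1 by auto. field; auto. }
  cbv beta iota delta [lor chi dot3] in H2, H3, H4.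
  assert (G2 : E 2%nat 4%nat = E 2%nat 1%nat * X 1%nat + E 2%nat 2%nat * X 2%nat
     + E 2%nat 3%nat * X 3%nat
     - E 2%nat 0%nat * (/ 2 * (X 1%nat * X 1%nat + X 2%nat * X 2%nat + X 3%nat * X 3%nat))) by lra.
  assert (G3 : E 3%nat 4%nat = E 3%nat 1%nat * X 1%nat + E 3%nat 2%nat * X 2%nat
     + E 3%nat 3%nat * X 3%nat
     - E 3%nat 0%nat * (/ 2 * (X 1%nat * X 1%nat + X 2%nat * X 2%nat + X 3%nat * X 3%nat))) by lra.
  assert (G4 : E 4%nat 4%nat = E 4%nat 1%nat * X 1%nat + E 4%nat 2%nat * X 2%nat
     + E 4%nat 3%nat * X 3%nat
     - E 4%nat 0%nat * (/ 2 * (X 1%nat * X 1%nat + X 2%nat * X 2%nat + X 3%nat * X 3%nat))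
     + / lam).
  { apply (Rmult_eq_reg_l lam); auto. rewrite Rmult_plus_distr_l, Rinv_r by auto. lra. }
  cbv beta iota zeta delta [detn lapl skip sgn Nat.ltb Nat.leb matof].
  rewrite !H0, !G1 by lia. rewrite G2, G3, G4.
  unfold det3, dot3, cross3, vv. cbv beta iota delta [chi chi_deriv dot3].
  field. auto.
Qed.

(** * The rotation angle of a periodic unit vector field *)

Lemma cos_eq_1_2PI x : cos x = 1 -> exists k : Z, x = 2 * IZR k * PI.
Proof.
  intros Hc.
  assert (Hs : sin (x / 2) = 0).
  { pose proof (cos_2a_sin (x / 2)) as H. replace (2 * (x / 2)) with x in H by field. nra. }
  destruct (sin_eq_0_0 _ Hs) as [k Hk]. exists k.
  replace x with (2 * (x / 2)) by field. rewrite Hk. ring.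
Qed.

Lemma rotation_angle_2PI (P Q w Th : R -> R) a b :
  a < b ->
  (forall t, a <= t <= b -> derivable_pt_lim P t (- w t * Q t)) ->
  (forall t, a <= t <= b -> derivable_pt_lim Q t (w t * P t)) ->
  (forall t, a <= t <= b -> derivable_pt_lim Th t (w t)) ->
  P b = P a -> Q b = Q a -> P a ^ 2 + Q a ^ 2 = 1 ->
  exists k : Z, Th b - Th a = 2 * IZR k * PI.
Proof.
  intros Hab HP HQ HTh Pb Qb Hunit.
  set (rot t := Th t - Th a).
  assert (Hrot : forall t, a <= t <= b -> derivable_pt_lim rot t (w t)).
  { intros t Ht. eapply derivable_pt_lim_val;
      [apply derivable_pt_lim_minus; [apply HTh, Ht | apply derivable_pt_lim_const] | ring]. }
  (* [(P, Q)] rotated back by the angle [rot] is constant. *)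
  assert (K1 : cos (rot b) * P b + sin (rot b) * Q b = cos (rot a) * P a + sin (rot a) * Q a).
  { apply (null_derivative_interval (fun t => cos (rot t) * P t + sin (rot t) * Q t)); auto.
    intros t Ht. eapply derivable_pt_lim_val.
    - apply derivable_pt_lim_plus; apply derivable_pt_lim_mult;
        auto using derivable_pt_lim_cos_comp, derivable_pt_lim_sin_comp.
    - cbv beta; ring. }
  assert (K2 : - sin (rot b) * P b + cos (rot b) * Q b
             = - sin (rot a) * P a + cos (rot a) * Q a).
  { apply (null_derivative_interval (fun t => - sin (rot t) * P t + cos (rot t) * Q t)); auto.
    intros t Ht. eapply derivable_pt_lim_val.
    - apply derivable_pt_lim_plus; apply derivable_pt_lim_mult; auto.
      + apply derivable_pt_lim_opp, derivable_pt_lim_sin_comp; auto.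
      + apply derivable_pt_lim_cos_comp; auto.
    - cbv beta; ring. }
  assert (rot a = 0) as Ha by (unfold rot; ring).
  rewrite Ha, cos_0, sin_0, Pb, Qb in *.
  set (c := cos (rot b)) in *. set (s := sin (rot b)) in *.
  assert (((c - 1) ^ 2 + s ^ 2) * (P a ^ 2 + Q a ^ 2) = 0) as H0.
  { transitivity (((c - 1) * P a + s * Q a) ^ 2 + (- s * P a + (c - 1) * Q a) ^ 2); [ring|].
    replace ((c - 1) * P a + s * Q a) with 0 by lra.
    replace (- s * P a + (c - 1) * Q a) with 0 by lra. ring. }
  rewrite Hunit in H0.
  apply cos_eq_1_2PI. change (c = 1).
  pose proof (pow2_ge_0 (c - 1)). pose proof (pow2_ge_0 s). nra.
Qed.

(** * The normal frame of a closed curve *)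

Section ClosedCurve.
Variables (Fd : nat -> R -> R3) (L : R) (sigma dsigma mu1 mu2 : R -> R) (e : R -> frame).
Hypotheses (Htow : smooth_curve_tower Fd)
  (Hper : forall (t : R) (i : nat), (1 <= i <= 3)%nat -> Fd 0%nat (t + L) i = Fd 0%nat t i)
  (Hreg : forall t, norm3 (Fd 1%nat t) <> 0)
  (Hcurv : forall t, curvature Fd t <> 0)
  (Hsig : forall t, derivable_pt_lim sigma t (dsigma t))
  (Hdsig : forall t, 0 < dsigma t)
  (Hmob : forall s, Mob3 (e s))
  (Hfr : conformal_frenet e mu1 mu2)
  (Hbase : forall t, exists lam : R, lam <> 0 /\
      forall i : nat, (i <= 4)%nat -> e (sigma t) 0%nat i = lam * chi (Fd 0%nat t) i).

Let E t := e (sigma t).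
Let m2 t := mu2 (sigma t).

Lemma Fd_periodic n t i : (1 <= i <= 3)%nat -> Fd n (t + L) i = Fd n t i.
Proof. apply smooth_curve_tower_periodic; assumption. Qed.

Lemma E_frenet : frenet_at_speed E dsigma (fun t => mu1 (sigma t)) m2.
Proof. exact (frenet_at_speed_reparam e mu1 mu2 sigma dsigma Hfr Hsig). Qed.

Lemma E_isometry t : is_isometry (E t).
Proof. apply Mob3_isometry, Hmob. Qed.

Lemma E0_chi t i : (i <= 4)%nat -> E t 0%nat i = E t 0%nat 0%nat * chi (Fd 0%nat t) i.
Proof.
  destruct (Hbase t) as [lam [_ H]]. intros Hi. unfold E. rewrite !H by lia.
  cbv beta iota delta [chi]. ring.
Qed.

Lemma E00_pos t : 0 < E t 0%nat 0%nat.
Proof.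
  pose proof (Mob3_e0_time_pos _ (Hmob (sigma t))) as H. fold (E t) in H.
  rewrite (E0_chi t 4%nat) in H by lia. cbv beta iota delta [chi] in H.
  pose proof (dot3_nonneg (Fd 0%nat t)).
  assert (0 < 1 + / 2 * dot3 (Fd 0%nat t) (Fd 0%nat t)) by lra. nra.
Qed.

Lemma E1_speed t i : (i <= 4)%nat -> dsigma t * E t 1%nat i =
  (dsigma t * E t 1%nat 0%nat) * chi (Fd 0%nat t) i
  + E t 0%nat 0%nat * chi_deriv (Fd 0%nat t) (Fd 1%nat t) i.
Proof.
  intros Hi. eapply uniqueness_limite; [apply (E_frenet t 0%nat i ltac:(lia) Hi)|].
  apply (derivable_pt_lim_ext (fun s => E s 0%nat 0%nat * chi (Fd 0%nat s) i)).
  { intros z. now rewrite (E0_chi z i). }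
  apply derivable_pt_lim_mult; [apply E_frenet; lia|].
  apply derivable_pt_lim_chi. intros; now apply Htow.
Qed.

Lemma E_lor_chi t : lor (E t 2%nat) (chi (Fd 0%nat t)) = 0
  /\ lor (E t 3%nat) (chi (Fd 0%nat t)) = 0
  /\ E t 0%nat 0%nat * lor (E t 4%nat) (chi (Fd 0%nat t)) = -1.
Proof.
  assert (Hl : forall A, (A <= 4)%nat ->
      E t 0%nat 0%nat * lor (E t A) (chi (Fd 0%nat t)) = lor (E t A) (E t 0%nat)).
  { intros A HA. rewrite <- lor_scale_r. apply lor_ext; [reflexivity|].
    intros; symmetry; now apply E0_chi. }
  pose proof (Hl 2%nat ltac:(lia)). pose proof (Hl 3%nat ltac:(lia)).
  pose proof (Hl 4%nat ltac:(lia)). pose proof (E00_pos t).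
  gram (E_isometry t). repeat split; nra.
Qed.

Let n2 t := vv (E t 2%nat) (Fd 0%nat t).
Let n3 t := vv (E t 3%nat) (Fd 0%nat t).

Lemma normal_frame_oriented t : 0 < det3 (Fd 1%nat t) (n2 t) (n3 t).
Proof.
  destruct (E_lor_chi t) as (H2 & H3 & H4).
  pose proof (detn_frame_chi (E t) (Fd 0%nat t) (Fd 1%nat t) _ _ _
    (E0_chi t) (E1_speed t) H2 H3 H4 (Rgt_not_eq _ _ (Hdsig t)) (Rgt_not_eq _ _ (E00_pos t))) as H.
  pose proof (Mob3_det_pos _ (Hmob (sigma t))). fold (E t) in *.
  pose proof (Hdsig t). pose proof (E00_pos t).
  assert (0 < dsigma t * detn 5 (matof (E t))) as Hpos by (apply Rmult_lt_0_compat; auto).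
  rewrite H in Hpos. unfold n2, n3. nra.
Qed.

Lemma normal_frame_orthonormal t :
  dot3 (n2 t) (Fd 1%nat t) = 0 /\ dot3 (n3 t) (Fd 1%nat t) = 0 /\
  dot3 (n2 t) (n2 t) = 1 /\ dot3 (n3 t) (n3 t) = 1 /\ dot3 (n2 t) (n3 t) = 0.
Proof.
  destruct (E_lor_chi t) as (H2 & H3 & _).
  assert (Htan : forall A, (A <= 4)%nat -> lor (E t A) (chi (Fd 0%nat t)) = 0 ->
      lor (E t A) (E t 1%nat) = 0 -> dot3 (vv (E t A) (Fd 0%nat t)) (Fd 1%nat t) = 0).
  { intros A HA HAc HA1. rewrite <- lor_chi_deriv.
    assert (dsigma t * lor (E t A) (E t 1%nat)
            = E t 0%nat 0%nat * lor (E t A) (chi_deriv (Fd 0%nat t) (Fd 1%nat t))) as H.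
    { rewrite <- !lor_scale_r, (lor_ext (E t A) (E t A) _ _ (fun _ _ => eq_refl) (E1_speed t)).
      rewrite lor_plus_r, !lor_scale_r, HAc. ring. }
    pose proof (E00_pos t). rewrite HA1 in H. nra. }
  unfold n2, n3. rewrite <- !lor_orth_chi by assumption.
  gram (E_isometry t). repeat split; try reflexivity; apply Htan; auto;
    gram (E_isometry t); reflexivity.
Qed.

Lemma E_shift_chi s i : (i <= 4)%nat ->
  E (s + L) 0%nat i = E (s + L) 0%nat 0%nat * chi (Fd 0%nat s) i.
Proof.
  intros Hi. rewrite E0_chi by assumption. f_equal.
  destruct i as [|[|[|[|[|i]]]]]; cbv beta iota delta [chi dot3]; rewrite ?Hper by lia; reflexivity.
Qed.

(* [E] and its translate by the period are conformal frames along the same curve [chi o F]. *)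
Lemma n2_periodic t k : (1 <= k <= 3)%nat -> n2 (t + L) k = n2 t k.
Proof.
  intros Hk. unfold n2, vv. rewrite Hper by assumption.
  exact (proj2 (frame_rigidity E (fun s => E (s + L)) _ _ _ _ _ _ (fun s => Fd 0%nat s)
    E_frenet (frenet_at_speed_shift _ _ _ _ L E_frenet) E_isometry (fun s => E_isometry (s + L))
    Hdsig (fun s => Hdsig (s + L)) E00_pos (fun s => E00_pos (s + L)) E0_chi E_shift_chi t) k Hk).
Qed.

Lemma velocity_sqr_pos t : 0 < dot3 (Fd 1%nat t) (Fd 1%nat t).
Proof.
  destruct (dot3_nonneg (Fd 1%nat t)) as [H|H]; [exact H|].
  exfalso; apply (Hreg t). unfold norm3. rewrite <- H. apply sqrt_0.
Qed.

Lemma n3_cross t k : (1 <= k <= 3)%nat ->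
  n3 t k * norm3 (Fd 1%nat t) = cross3 (Fd 1%nat t) (n2 t) k.
Proof.
  destruct (normal_frame_orthonormal t) as (a1 & a2 & a3 & a4 & a5).
  apply cross3_oriented_normal; rewrite ?(dot3_sym (Fd 1%nat t)); auto.
  - apply velocity_sqr_pos.
  - apply normal_frame_oriented.
Qed.

Lemma n3_periodic t k : (1 <= k <= 3)%nat -> n3 (t + L) k = n3 t k.
Proof.
  intros Hk. pose proof (n3_cross (t + L) k Hk) as H.
  assert (norm3 (Fd 1%nat (t + L)) = norm3 (Fd 1%nat t)) as Hn.
  { unfold norm3, dot3; rewrite !Fd_periodic by lia; reflexivity. }
  assert (cross3 (Fd 1%nat (t + L)) (n2 (t + L)) k = cross3 (Fd 1%nat t) (n2 t) k) as Hc.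
  { destruct k as [|[|[|[|k]]]]; try lia; cbv beta iota delta [cross3];
      rewrite !Fd_periodic, !n2_periodic by lia; reflexivity. }
  rewrite Hn, Hc, <- (n3_cross t k Hk) in H.
  apply Rmult_eq_reg_r in H; [exact H|]. apply Hreg.
Qed.

Let speed t := norm3 (Fd 1%nat t).
Let B t := cross3 (Fd 1%nat t) (Fd 2%nat t).
Let dB t := cross3 (Fd 1%nat t) (Fd 3%nat t).
Let Nv t := cross3 (B t) (Fd 1%nat t).
Let p t := dot3 (n2 t) (B t).
Let q t := dot3 (n3 t) (B t).
Let beta t := norm3 (B t).
Let w t := torsion Fd t * speed t - dsigma t * m2 t.

Lemma speed_pos t : 0 < speed t.
Proof. apply sqrt_lt_R0, velocity_sqr_pos. Qed.

Lemma speed_sqr t : speed t * speed t = dot3 (Fd 1%nat t) (Fd 1%nat t).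
Proof. apply sqrt_sqrt, dot3_nonneg. Qed.

Lemma B_sqr_pos t : 0 < dot3 (B t) (B t).
Proof.
  destruct (dot3_nonneg (B t)) as [H|H]; [exact H|].
  exfalso; apply (Hcurv t). unfold curvature, norm3. fold (B t).
  rewrite <- H, sqrt_0. unfold Rdiv; ring.
Qed.

Lemma beta_pos t : 0 < beta t.
Proof. apply sqrt_lt_R0, B_sqr_pos. Qed.

Lemma beta_sqr t : beta t * beta t = dot3 (B t) (B t).
Proof. apply sqrt_sqrt, dot3_nonneg. Qed.

Lemma torsion_eq t : torsion Fd t = det3 (Fd 1%nat t) (Fd 2%nat t) (Fd 3%nat t) / dot3 (B t) (B t).
Proof. unfold torsion, norm3. fold (B t). now rewrite pow2_sqrt by apply dot3_nonneg. Qed.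

Lemma speed_dot_n3 t Y : speed t * dot3 (n3 t) Y = dot3 (cross3 (Fd 1%nat t) (n2 t)) Y.
Proof.
  unfold dot3 at 2. rewrite <- !n3_cross by lia. unfold dot3; fold (speed t). ring.
Qed.

Lemma dot_n2_Nv t : dot3 (n2 t) (Nv t) = speed t * q t.
Proof. unfold q. rewrite speed_dot_n3. unfold Nv; unfold3; ring. Qed.

Lemma dot_n3_Nv t : dot3 (n3 t) (Nv t) = - speed t * p t.
Proof.
  apply (Rmult_eq_reg_l (speed t)); [|apply Rgt_not_eq, speed_pos].
  rewrite speed_dot_n3. unfold Nv. rewrite dot3_cross3, (proj1 (normal_frame_orthonormal t)).
  unfold p. rewrite <- speed_sqr. ring.
Qed.

Lemma dot_dB_Nv t :
  dot3 (dB t) (Nv t)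
  = - dot3 (Fd 1%nat t) (Fd 1%nat t) * det3 (Fd 1%nat t) (Fd 2%nat t) (Fd 3%nat t).
Proof. unfold dB, Nv, B. unfold3. ring. Qed.

(* Expanding [n] and [dB] in the frame [F', Nv, B] produces the torsion term. *)
Lemma dot_normal_dB (n : R3) t :
  dot3 n (Fd 1%nat t) = 0 ->
  dot3 (B t) (B t) * dot3 (Fd 1%nat t) (Fd 1%nat t) * dot3 n (dB t) =
  dot3 n (Nv t) * dot3 (dB t) (Nv t)
  + dot3 (Fd 1%nat t) (Fd 1%nat t) * dot3 n (B t) * dot3 (dB t) (B t).
Proof.
  intros Hn. pose proof (dot3_orthogonal_expansion n (dB t) (Fd 1%nat t) (Fd 2%nat t)) as H.
  cbv zeta in H. fold (B t) (Nv t) in H. rewrite H, Hn. ring.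
Qed.

Lemma dot_n2_dB t :
  dot3 (n2 t) (dB t) = - torsion Fd t * speed t * q t + p t * dot3 (dB t) (B t) / dot3 (B t) (B t).
Proof.
  pose proof (dot_normal_dB (n2 t) t (proj1 (normal_frame_orthonormal t))) as H.
  rewrite dot_n2_Nv, dot_dB_Nv in H. fold (p t) in H. rewrite torsion_eq.
  pose proof (B_sqr_pos t). pose proof (velocity_sqr_pos t).
  apply (Rmult_eq_reg_l (dot3 (B t) (B t) * dot3 (Fd 1%nat t) (Fd 1%nat t))); [|nra].
  rewrite H, <- speed_sqr. field. lra.
Qed.

Lemma dot_n3_dB t :
  dot3 (n3 t) (dB t) = torsion Fd t * speed t * p t + q t * dot3 (dB t) (B t) / dot3 (B t) (B t).
Proof.
  pose proof (dot_normal_dB (n3 t) t (proj1 (proj2 (normal_frame_orthonormal t)))) as H.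
  rewrite dot_n3_Nv, dot_dB_Nv in H. fold (q t) in H. rewrite torsion_eq.
  pose proof (B_sqr_pos t). pose proof (velocity_sqr_pos t).
  apply (Rmult_eq_reg_l (dot3 (B t) (B t) * dot3 (Fd 1%nat t) (Fd 1%nat t))); [|nra].
  rewrite H, <- speed_sqr. field. lra.
Qed.

Lemma derivable_pt_lim_n2 t k : (1 <= k <= 3)%nat ->
  derivable_pt_lim (fun s => n2 s k) t (dsigma t * m2 t * n3 t k - E t 2%nat 0%nat * Fd 1%nat t k).
Proof.
  intros Hk. unfold n2, n3, vv. eapply derivable_pt_lim_val.
  - apply derivable_pt_lim_minus; [apply E_frenet; lia|].
    apply derivable_pt_lim_mult; [apply E_frenet; lia | apply Htow; exact Hk].
  - cbn [frenet_rhs]. rewrite (E0_chi t k), (E0_chi t 0%nat) by lia.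
    destruct k as [|[|[|[|k]]]]; try lia; cbv beta iota delta [chi]; ring.
Qed.

Lemma derivable_pt_lim_n3 t k : (1 <= k <= 3)%nat ->
  derivable_pt_lim (fun s => n3 s k) t
    (- dsigma t * m2 t * n2 t k - E t 3%nat 0%nat * Fd 1%nat t k).
Proof.
  intros Hk. unfold n2, n3, vv. eapply derivable_pt_lim_val.
  - apply derivable_pt_lim_minus; [apply E_frenet; lia|].
    apply derivable_pt_lim_mult; [apply E_frenet; lia | apply Htow; exact Hk].
  - cbn [frenet_rhs]. ring.
Qed.

Lemma derivable_pt_lim_B t k : (1 <= k <= 3)%nat -> derivable_pt_lim (fun s => B s k) t (dB t k).
Proof.
  intros Hk. unfold B, dB.
  destruct k as [|[|[|[|k]]]]; try lia; cbv beta iota delta [cross3];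
    (eapply derivable_pt_lim_val; [derive_poly; apply Htow; lia | cbv beta; ring]).
Qed.

Lemma derivable_pt_lim_p t : derivable_pt_lim p t (dsigma t * m2 t * q t + dot3 (n2 t) (dB t)).
Proof.
  eapply derivable_pt_lim_val.
  - apply (derivable_pt_lim_dot3 n2 B); [apply derivable_pt_lim_n2 | apply derivable_pt_lim_B].
  - transitivity (dsigma t * m2 t * q t + dot3 (n2 t) (dB t)
      - E t 2%nat 0%nat * dot3 (Fd 1%nat t) (B t)); [unfold q, dot3; ring|].
    unfold B; rewrite dot3_cross3_l; ring.
Qed.

Lemma derivable_pt_lim_q t : derivable_pt_lim q t (- dsigma t * m2 t * p t + dot3 (n3 t) (dB t)).
Proof.
  eapply derivable_pt_lim_val.
  - apply (derivable_pt_lim_dot3 n3 B); [apply derivable_pt_lim_n3 | apply derivable_pt_lim_B].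
  - transitivity (- dsigma t * m2 t * p t + dot3 (n3 t) (dB t)
      - E t 3%nat 0%nat * dot3 (Fd 1%nat t) (B t)); [unfold p, dot3; ring|].
    unfold B; rewrite dot3_cross3_l; ring.
Qed.

Lemma derivable_pt_lim_beta t : derivable_pt_lim beta t (dot3 (dB t) (B t) / beta t).
Proof.
  eapply derivable_pt_lim_val.
  - apply derivable_pt_lim_sqrt_comp; [|apply B_sqr_pos].
    apply (derivable_pt_lim_dot3 B B); apply derivable_pt_lim_B.
  - rewrite (dot3_sym (B t) (dB t)). pose proof (beta_pos t). unfold beta, norm3 in *.
    field. lra.
Qed.

Lemma derivable_pt_lim_p_beta t :
  derivable_pt_lim (fun s => p s / beta s) t (- w t * (q t / beta t)).
Proof.
  eapply derivable_pt_lim_val.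
  - apply derivable_pt_lim_div;
      [apply derivable_pt_lim_p | apply derivable_pt_lim_beta | apply Rgt_not_eq, beta_pos].
  - rewrite dot_n2_dB. unfold w, Rsqr. rewrite <- beta_sqr. pose proof (beta_pos t). field. lra.
Qed.

Lemma derivable_pt_lim_q_beta t :
  derivable_pt_lim (fun s => q s / beta s) t (w t * (p t / beta t)).
Proof.
  eapply derivable_pt_lim_val.
  - apply derivable_pt_lim_div;
      [apply derivable_pt_lim_q | apply derivable_pt_lim_beta | apply Rgt_not_eq, beta_pos].
  - rewrite dot_n3_dB. unfold w, Rsqr. rewrite <- beta_sqr. pose proof (beta_pos t). field. lra.
Qed.

(* [B] is normal to [F'], so its coordinates on the orthonormal pair [n2, n3] exhaust its length. *)
Lemma p_q_unit t : (p t / beta t) ^ 2 + (q t / beta t) ^ 2 = 1.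
Proof.
  destruct (normal_frame_orthonormal t) as (a1 & a2 & a3 & a4 & a5).
  pose proof (det3_sqr_gram (Fd 1%nat t) (n2 t) (B t)) as G.
  rewrite (dot3_sym (Fd 1%nat t) (n2 t)), a1, a3, (dot3_sym (B t) (Fd 1%nat t)) in G.
  assert (dot3 (Fd 1%nat t) (B t) = 0) as HB0 by apply dot3_cross3_l.
  rewrite HB0 in G. fold (p t) in G.
  assert (det3 (Fd 1%nat t) (n2 t) (B t) = speed t * q t) as Hq.
  { unfold q. rewrite speed_dot_n3. reflexivity. }
  rewrite Hq in G. rewrite <- speed_sqr in G.
  pose proof (speed_pos t). pose proof (beta_pos t).
  assert (q t ^ 2 = dot3 (B t) (B t) - p t ^ 2) as Hq2.
  { apply (Rmult_eq_reg_l (speed t * speed t)); [|nra]. nra. }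
  rewrite <- beta_sqr in Hq2. field_simplify; [|lra]. rewrite Hq2. field. lra.
Qed.

Lemma B_periodic t k : (1 <= k <= 3)%nat -> B (t + L) k = B t k.
Proof.
  intros Hk. unfold B.
  destruct k as [|[|[|[|k]]]]; try lia; cbv beta iota delta [cross3];
    rewrite !Fd_periodic by lia; reflexivity.
Qed.

Lemma normal_angle :
  exists P Q : R -> R,
    (forall t, derivable_pt_lim P t (- w t * Q t)) /\
    (forall t, derivable_pt_lim Q t (w t * P t)) /\
    P L = P 0 /\ Q L = Q 0 /\ P 0 ^ 2 + Q 0 ^ 2 = 1.
Proof.
  exists (fun s => p s / beta s), (fun s => q s / beta s).
  split; [apply derivable_pt_lim_p_beta|]. split; [apply derivable_pt_lim_q_beta|].
  rewrite <- (Rplus_0_l L).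
  unfold p, q, beta, norm3, dot3. rewrite !n2_periodic, !n3_periodic, !B_periodic by lia.
  split; [reflexivity|]. split; [reflexivity|]. apply p_q_unit.
Qed.

Lemma torsion_speed_continuity t : continuity_pt (fun s => torsion Fd s * speed s) t.
Proof.
  assert (HFd : forall n i s, (1 <= i <= 3)%nat -> continuity_pt (fun s => Fd n s i) s).
  { intros n i s Hi. eapply derivable_pt_lim_continuity_pt. apply Htow, Hi. }
  apply continuity_pt_locally_ext with (a := 1)
    (f := fun s => det3 (Fd 1%nat s) (Fd 2%nat s) (Fd 3%nat s) / dot3 (B s) (B s) * speed s);
    [lra | intros; now rewrite torsion_eq |].
  apply continuity_pt_mult; [apply continuity_pt_div|].
  - unfold3. continuity_poly; apply HFd; lia.
  - unfold B; unfold3. continuity_poly; apply HFd; lia.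
  - apply Rgt_not_eq, B_sqr_pos.
  - apply (continuity_pt_comp (fun s => dot3 (Fd 1%nat s) (Fd 1%nat s)) sqrt).
    + unfold dot3. continuity_poly; apply HFd; lia.
    + apply continuity_pt_sqrt, dot3_nonneg.
Qed.

End ClosedCurve.

Theorem mainTheorem3
  (Fd : nat -> R -> R3) (L : R) (dk : R -> R)
  (sigma dsigma mu1 mu2 : R -> R) (e : R -> frame) :
  smooth_curve_tower Fd ->
  0 < L ->
  (forall (t : R) (i : nat), (1 <= i <= 3)%nat -> Fd 0%nat (t + L) i = Fd 0%nat t i) ->
  (forall t, norm3 (Fd 1%nat t) <> 0) ->
  (forall t, curvature Fd t <> 0) ->
  (forall t, derivable_pt_lim (curvature Fd) t (dk t)) ->
  (forall t, (dk t / norm3 (Fd 1%nat t)) ^ 2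
             + (curvature Fd t) ^ 2 * (torsion Fd t) ^ 2 <> 0) ->
  is_smooth sigma ->
  (forall t, derivable_pt_lim sigma t (dsigma t)) ->
  (forall t, 0 < dsigma t) ->
  is_smooth mu1 -> is_smooth mu2 ->
  (forall s, Mob3 (e s)) ->
  conformal_frenet e mu1 mu2 ->
  (forall t, exists lam : R, lam <> 0 /\
      forall i : nat, (i <= 4)%nat -> e (sigma t) 0%nat i = lam * chi (Fd 0%nat t) i) ->
  forall (p1 : Riemann_integrable mu2 (sigma 0) (sigma L))
         (p2 : Riemann_integrable (fun t => torsion Fd t * norm3 (Fd 1%nat t)) 0 L),
  exists m : Z, RiemannInt p1 / (2 * PI) - RiemannInt p2 / (2 * PI) = IZR m.
Proof.
  intros Htow HL Hper Hreg Hcurv _ _ _ Hsig Hdsig _ Hmu2 Hmob Hfr Hbase p1 p2.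
  destruct (normal_angle Fd L sigma dsigma mu1 mu2 e Htow Hper Hreg Hcurv Hsig Hdsig Hmob Hfr
    Hbase) as (P & Q & HP & HQ & HPL & HQL & Hunit).
  assert (Hmono : forall a b, a <= b -> sigma a <= sigma b)
    by (intros; eapply increasing_of_pos_derivative; eauto).
  destruct (RiemannInt_antiderivative _ _ _ p2 (Rlt_le _ _ HL)
    (fun x _ => torsion_speed_continuity Fd Htow Hcurv x)) as (W & HW & HWint).
  destruct (RiemannInt_antiderivative _ _ _ p1 (Hmono 0 L (Rlt_le _ _ HL))
    (fun x _ => is_smooth_continuity mu2 Hmu2 x)) as (M & HM & HMint).
  destruct (rotation_angle_2PI P Q _ (fun t => W t - M (sigma t)) 0 L HL
    (fun t _ => HP t) (fun t _ => HQ t)) as [k Hk]; auto.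
  - intros t Ht. eapply derivable_pt_lim_val.
    + apply derivable_pt_lim_minus; [now apply HW|].
      apply (derivable_pt_lim_comp sigma M); [apply Hsig | apply HM; split; apply Hmono; lra].
    + ring.
  - exists (- k)%Z. rewrite opp_IZR. pose proof PI_RGT_0.
    apply (Rmult_eq_reg_r (2 * PI)); [|lra]. field_simplify; [|lra]. lra.
Qed.
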